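(* Let $\mathcal{Z}=\mathcal{Z}_G^{\mathcal{C}}\subset\mathrm{Sym}(p)$ be a cBC-space with respect to an ordered partition $(n_1,\dots,n_r)$ of $p$, let $i\in[r]$, $\alpha\in[d_i]$, and let $A\in\mathrm{Sym}^+(p)$. Let $\{B^{(i)}_1,\dots,B^{(i)}_{q_i}\}$ be a basis of $L_i(\mathcal{Z})$, set $U_t=B^{(i)}_tc^{(i)}_\alpha$ for $t\in[q_i]$, and let $G_{i,\alpha}\in\mathbb{R}^{q_i\times q_i}$ be the Gram matrix $(G_{i,\alpha})_{ts}=\operatorname{tr}(U_tU_s^\top)$. Then $m_{i,\alpha}=\operatorname{rank}G_{i,\alpha}$. Moreover, let $m=m_{i,\alpha}$, and if $m>0$ let $t_1,\dots,t_m\in[q_i]$ be indices such that the principal submatrix $\widetilde G_{i,\alpha}=((G_{i,\alpha})_{t_kt_l})_{k,l\in[m]}$ is nonsingular (e.g. the pivots of a Cholesky decomposition with complete pivoting). Put $U'_k=U_{t_k}$, $\Psi_{i,\alpha}(A)\in\mathbb{R}^{m\times m}$ with $(\Psi_{i,\alpha}(A))_{kl}=\operatorname{tr}(AU'_k(U'_l)^\top)$, $V_{i,\alpha}(A)\in\mathbb{R}^{1\times m}$ with $(V_{i,\alpha}(A))_{1k}=\mu_{i,\alpha}^{-1/2}\operatorname{tr}(Ac^{(i)}_\alpha(U'_k)^\top)$, and $\lambda_{i,\alpha}(A)=\mu_{i,\alpha}^{-1}\operatorname{tr}(Ac^{(i)}_\alpha)$. Then $\{U'_1,\dots,U'_m\}$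 is a basis of $\mathfrak{h}_{i,\alpha}$, $\Psi_{i,\alpha}(A)$ is positive definite, and $$\det\psi_{i,\alpha}(A)=\frac{\det\Psi_{i,\alpha}(A)}{\det\widetilde G_{i,\alpha}},\qquad \frac{\det\phi_{i,\alpha}(A)}{\det\psi_{i,\alpha}(A)}=\lambda_{i,\alpha}(A)-V_{i,\alpha}(A)\Psi_{i,\alpha}(A)^{-1}V_{i,\alpha}(A)^\top.$$ If $m=0$, then (with the convention $\det\psi_{i,\alpha}(A)=1$) $\det\phi_{i,\alpha}(A)/\det\psi_{i,\alpha}(A)=\lambda_{i,\alpha}(A)$.
   Context: Colored graph: $G=(V,E)$ finite simple undirected graph on $V=[p]$ with a coloring $\mathcal{C}$: vertex color classes $V_1,\dots,V_r$, edge color classes partitioning $E$; the extended edge set $\tilde E=E\cup\{\{v\}:v\in V\}$ is colored with loops $\{v\}$ colored by the color of $v$, and $c(v,w)$ denotes the color of $\{v,w\}\in\tilde E$. $\mathcal{Z}_G^{\mathcal{C}}$ is the space of $x\in\mathrm{Sym}(p)$ with $x_{ij}=0$ whenever $i\ne j$, $\{i,j\}\notin E$, and $x_{ij}=x_{kl}$ whenever $\{i,j\},\{k,l\}\in\tilde E$ have $c(i,j)=c(k,l)$. Block notation: for an ordered partition $(n_1,\dots,n_r)$ of $p$, $x\in\mathrm{Sym}(p)$ has blocks $X_{kh}\in\mathbb{R}^{n_k\times n_h}$; $\mathrm{BlockTri}(x)$ keeps blocks with $k\ge h$, $\mathrm{BlockDiag}(x)$ keeps only diagonal blocks. $M_i(\mathcal{Z})=\{x\in\mathcal{Z}: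 X_{kh}=0$ unless $(k,h)=(i,i)\}$, $L_i(\mathcal{Z})=\{x\in\mathcal{Z}: X_{kh}=0$ unless $k>h=i$ or $h>k=i\}$. $\mathcal{Z}$ is a cBC-space if (Z0) $I_p\in\mathcal{Z}$ and $\mathcal{Z}=(\bigoplus_{i\in[r]}M_i(\mathcal{Z}))\oplus(\bigoplus_{i\in[r-1]}L_i(\mathcal{Z}))$; (Z1) $\mathrm{BlockTri}(x)\mathrm{BlockTri}(x)^\top\in\mathcal{Z}$ for all $x\in\mathcal{Z}$; (Z2) $\mathrm{BlockDiag}(x)\mathrm{BlockDiag}(y)\in\mathcal{Z}$ for all $x,y\in\mathcal{Z}$. Structure data: $e^{(i)}$ is the $p\times p$ matrix with $(i,i)$ block $I_{n_i}$ and others $0$; $\{c^{(i)}_\alpha\}_{\alpha\in[d_i]}$ is a Jordan frame of $M_i(\mathcal{Z})$ (a maximal family of nonzero mutually orthogonal idempotents $c^{(i)}_\alpha c^{(i)}_\beta=\delta_{\alpha\beta}c^{(i)}_\alpha$ in $M_i(\mathcal{Z})$ summing to $e^{(i)}$). $\mu_{i,\alpha}=\operatorname{rank}c^{(i)}_\alpha$, $\tilde e^{(i)}_\alpha=c^{(i)}_\alpha/\sqrt{\mu_{i,\alpha}}$, $c^{(i)}_{>\alpha}=\sum_{\beta>\alpha}c^{(i)}_\beta$, $\mathfrak{h}_{i,\alpha}=c^{(i)}_{>\alpha}M_i(\mathcal{Z})c^{(i)}_\alpha\oplus L_i(\mathcal{Z})c^{(i)}_\alpha$, with an orthonormal basis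 $\{\tilde f^{(i)}_\gamma\}_{\gamma\in J_{i,\alpha}}$ for $\langle X,Y\rangle=\operatorname{tr}(XY^\top)$, and $m_{i,\alpha}=\dim\mathfrak{h}_{i,\alpha}$. For $A\in\mathrm{Sym}(p)$ with $m_{i,\alpha}>0$: $\psi_{i,\alpha}(A)$ is the $m_{i,\alpha}\times m_{i,\alpha}$ matrix with entries $\operatorname{tr}(A\tilde f^{(i)}_\gamma(\tilde f^{(i)}_{\gamma'})^\top)$, $v_{i,\alpha}(A)$ the row vector with entries $\operatorname{tr}(A\tilde e^{(i)}_\alpha(\tilde f^{(i)}_\gamma)^\top)$, and $\phi_{i,\alpha}(A)=\begin{bmatrix}\operatorname{tr}(A\tilde e^{(i)}_\alpha\tilde e^{(i)}_\alpha)&v_{i,\alpha}(A)\\ v_{i,\alpha}(A)^\top&\psi_{i,\alpha}(A)\end{bmatrix}$; if $m_{i,\alpha}=0$, $\phi_{i,\alpha}(A)=\operatorname{tr}(A\tilde e^{(i)}_\alpha\tilde e^{(i)}_\alpha)$. *)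

From mathcomp Require Import all_boot all_order all_algebra.
Set Implicit Arguments. Unset Strict Implicit. Unset Printing Implicit Defensive.
Import Order.TTheory GRing.Theory Num.Theory.
Local Open Scope ring_scope.

Definition simple_graph (p : nat) (E : rel 'I_p) : Prop :=
  (forall v, ~~ E v v) /\ (forall v w, E v w = E w v).

(* {v,w} in the extended edge set E ∪ {{v} : v in V} *)
Definition ext_edge (p : nat) (E : rel 'I_p) (v w : 'I_p) : bool :=
  (v == w) || E v w.

(* Colour of an element of the extended edge set: loops {v} carry the colour
   of the vertex v (vertex palette = inl), genuine edges their edge colour
   (edge palette = inr).  [ecol] is only consulted on edges. *)
Definition gcolor (p : nat) (vcol : 'I_p -> nat) (ecol : 'I_p -> 'I_p -> nat)
  (v w : 'I_p) : nat + nat :=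
  if v == w then inl (vcol v) else inr (ecol v w).

Definition edge_coloring (p : nat) (E : rel 'I_p) (ecol : 'I_p -> 'I_p -> nat) : Prop :=
  forall v w, E v w -> ecol v w = ecol w v.

Definition inZG (R : rcfType) (p : nat) (E : rel 'I_p) (vcol : 'I_p -> nat)
  (ecol : 'I_p -> 'I_p -> nat) (x : 'M[R]_p) : Prop :=
  [/\ x^T = x,
      (forall a b, a != b -> ~~ E a b -> x a b = 0) &
      (forall a b c d, ext_edge E a b -> ext_edge E c d ->
         gcolor vcol ecol a b = gcolor vcol ecol c d -> x a b = x c d)].

(* Blocks are indexed from 0: [blk n a] is the (0-based) index of the block
   containing the row/column index a, i.e. the number of k with
   n_0 + ... + n_k <= a. *)
Definition blk (r : nat) (n : 'I_r -> nat) (p : nat) (a : 'I_p) : nat :=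
  #|[pred k : 'I_r | ((\sum_(l < r | (l <= k)%N) n l)%N <= a)%N]|.

Definition BlockTri (R : rcfType) (r : nat) (n : 'I_r -> nat) (p : nat)
  (x : 'M[R]_p) : 'M[R]_p :=
  \matrix_(a, b) if (blk n b <= blk n a)%N then x a b else 0.

Definition BlockDiag (R : rcfType) (r : nat) (n : 'I_r -> nat) (p : nat)
  (x : 'M[R]_p) : 'M[R]_p :=
  \matrix_(a, b) if blk n a == blk n b then x a b else 0.

Definition inM (R : rcfType) (r : nat) (n : 'I_r -> nat) (p : nat)
  (Z : 'M[R]_p -> Prop) (i : nat) (x : 'M[R]_p) : Prop :=
  Z x /\ forall a b, ~ (blk n a = i /\ blk n b = i) -> x a b = 0.

Definition inL (R : rcfType) (r : nat) (n : 'I_r -> nat) (p : nat)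
  (Z : 'M[R]_p -> Prop) (i : nat) (x : 'M[R]_p) : Prop :=
  Z x /\ forall a b,
    ~ ((blk n b = i /\ (blk n b < blk n a)%N) \/ (blk n a = i /\ (blk n a < blk n b)%N)) ->
    x a b = 0.

Definition eblk (R : rcfType) (r : nat) (n : 'I_r -> nat) (p : nat) (i : nat)
  : 'M[R]_p :=
  \matrix_(a, b) ((a == b) && (blk n a == i))%:R.

(* In (Z0) the sum is automatically direct since the
   summands have pairwise disjoint supports; we state the set equality
   Z = (sum of M_i(Z)) + (sum of L_i(Z), i in [r-1]) as two inclusions. *)
Definition cBC (R : rcfType) (r : nat) (n : 'I_r -> nat) (p : nat)
  (Z : 'M[R]_p -> Prop) : Prop :=
  [/\ Z 1%:M,
      (forall x, Z x -> exists xs ys : 'I_r -> 'M[R]_p,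
          [/\ forall k : 'I_r, inM n Z k (xs k),
              forall k : 'I_r, (k.+1 < r)%N -> inL n Z k (ys k) &
              x = \sum_(k : 'I_r) xs k + \sum_(k : 'I_r | (k.+1 < r)%N) ys k]),
      (forall xs ys : 'I_r -> 'M[R]_p,
          (forall k : 'I_r, inM n Z k (xs k)) ->
          (forall k : 'I_r, (k.+1 < r)%N -> inL n Z k (ys k)) ->
          Z (\sum_(k : 'I_r) xs k + \sum_(k : 'I_r | (k.+1 < r)%N) ys k)),
      (forall x, Z x -> Z (BlockTri n x *m (BlockTri n x)^T)) &
      (forall x y, Z x -> Z y -> Z (BlockDiag n x *m BlockDiag n y))].

Definition orth_idem_family (R : rcfType) (r : nat) (n : 'I_r -> nat) (p : nat)
  (Z : 'M[R]_p -> Prop) (i : nat) (d : nat) (c : 'I_d -> 'M[R]_p) : Prop :=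
  [/\ forall a, inM n Z i (c a),
      forall a, c a != 0,
      forall a b, c a *m c b = (if a == b then c a else 0) &
      \sum_(a < d) c a = eblk R n p i].

Definition jordan_frame (R : rcfType) (r : nat) (n : 'I_r -> nat) (p : nat)
  (Z : 'M[R]_p -> Prop) (i : nat) (d : nat) (c : 'I_d -> 'M[R]_p) : Prop :=
  orth_idem_family n Z i c /\
  forall d' (c' : 'I_d' -> 'M[R]_p), orth_idem_family n Z i c' -> (d' <= d)%N.

Definition is_basis (R : rcfType) (p : nat) (P : 'M[R]_p -> Prop) (k : nat)
  (f : 'I_k -> 'M[R]_p) : Prop :=
  [/\ forall t, P (f t),
      (forall a : 'I_k -> R, \sum_(t < k) a t *: f t = 0 -> forall t, a t = 0) &
      (forall y, P y -> exists a : 'I_k -> R, y = \sum_(t < k) a t *: f t)].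

Definition is_onbasis (R : rcfType) (p : nat) (P : 'M[R]_p -> Prop) (k : nat)
  (f : 'I_k -> 'M[R]_p) : Prop :=
  is_basis P f /\ forall g g', \tr (f g *m (f g')^T) = (g == g')%:R.

Definition cgt (R : rcfType) (p d : nat) (c : 'I_d -> 'M[R]_p) (al : 'I_d) : 'M[R]_p :=
  \sum_(b < d | (al < b)%N) c b.

Definition inh (R : rcfType) (r : nat) (n : 'I_r -> nat) (p : nat)
  (Z : 'M[R]_p -> Prop) (i : nat) (d : nat) (c : 'I_d -> 'M[R]_p) (al : 'I_d)
  (y : 'M[R]_p) : Prop :=
  exists x z, [/\ inM n Z i x, inL n Z i z & y = cgt c al *m x *m c al + z *m c al].

Definition psi (R : rcfType) (p m : nat) (A : 'M[R]_p) (f : 'I_m -> 'M[R]_p)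
  : 'M[R]_m :=
  \matrix_(g, g') \tr (A *m f g *m (f g')^T).

Definition vrow (R : rcfType) (p m : nat) (A et : 'M[R]_p) (f : 'I_m -> 'M[R]_p)
  : 'rV[R]_m :=
  \row_g \tr (A *m et *m (f g)^T).

(* phi as a (1+m)x(1+m) matrix; for m = 0 it is the 1x1 matrix tr(A e e). *)
Definition phi (R : rcfType) (p m : nat) (A et : 'M[R]_p) (f : 'I_m -> 'M[R]_p)
  : 'M[R]_(1 + m) :=
  block_mx (\tr (A *m et *m et))%:M (vrow A et f) (vrow A et f)^T (psi A f).

Definition posdef (R : rcfType) (k : nat) (S : 'M[R]_k) : Prop :=
  S^T = S /\ forall x : 'cV[R]_k, x != 0 -> 0 < (x^T *m S *m x) 0 0.

From mathcomp Require Import all_boot all_order all_algebra.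
From mathcomp Require Import ring.
Set Implicit Arguments. Unset Strict Implicit. Unset Printing Implicit Defensive.
Import Order.TTheory GRing.Theory Num.Theory.
Local Open Scope ring_scope.

(* By (Z2) the block M_i(Z) is a commutative algebra, so the frame idempotents
   commute with M_i(Z) and c_{>α} M_i(Z) c_α = 0: the space h_{i,α} is
   L_i(Z) c_α, spanned by the U_t.  Writing any family of h_{i,α} in the
   orthonormal basis f through its coordinate matrix C turns every Gram matrix
   into a congruence, G = C C^T and Ψ = C ψ C^T.  Hence rank G = m, a
   nonsingular principal minor of G selects a basis, det Ψ / det G~ = det ψ,
   and the Schur complement of ψ in φ is unchanged when (v, ψ) is replaced by
   (v C^T, C ψ C^T). *)

Section GramMatrices.
Variables (R : rcfType) (p : nat).
Implicit Types (A X Y W : 'M[R]_p).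

Definition bform A X Y : R := \tr (A *m X *m Y^T).

Definition gram A k (g : 'I_k -> 'M[R]_p) : 'M[R]_k :=
  \matrix_(x, y) bform A (g x) (g y).

Definition lin_indep k (g : 'I_k -> 'M[R]_p) : Prop :=
  forall a : 'I_k -> R, \sum_(t < k) a t *: g t = 0 -> forall t, a t = 0.

Lemma gram1E k (g : 'I_k -> 'M[R]_p) :
  gram 1%:M g = \matrix_(x, y) \tr (g x *m (g y)^T).
Proof. by apply/matrixP => x y; rewrite !mxE /bform mul1mx. Qed.

Lemma bform_suml A k (a : 'I_k -> R) g Y :
  bform A (\sum_j a j *: g j) Y = \sum_j a j * bform A (g j) Y.
Proof.
rewrite /bform mulmx_sumr mulmx_suml raddf_sum; apply: eq_bigr => j _.
by rewrite -scalemxAr -scalemxAl; apply: mxtraceZ.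
Qed.

Lemma bform_sumr A X k (b : 'I_k -> R) g :
  bform A X (\sum_j b j *: g j) = \sum_j b j * bform A X (g j).
Proof.
rewrite /bform linear_sum /= mulmx_sumr raddf_sum; apply: eq_bigr => j _.
by rewrite linearZ /= -scalemxAr; apply: mxtraceZ.
Qed.

Lemma bform_sym A X Y : A^T = A -> bform A X Y = bform A Y X.
Proof.
move=> AT; rewrite /bform -mxtrace_tr !trmx_mul trmxK AT.
by rewrite mulmxA mxtrace_mulC mulmxA.
Qed.

Lemma bform_col A W :
  bform A W W = \sum_j ((col j W)^T *m A *m col j W) 0 0.
Proof.
rewrite /bform mxtrace_mulC /mxtrace; apply: eq_bigr => j _.
rewrite !mxE; under eq_bigr do rewrite !mxE big_distrr.
under [RHS]eq_bigr do rewrite !mxE big_distrl.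
rewrite exchange_big /=; apply: eq_bigr => k _; apply: eq_bigr => l _.
rewrite !mxE; ring.
Qed.

Lemma bform_gt0 A W : posdef A -> W != 0 -> 0 < bform A W W.
Proof.
move=> [_ Apos] W0; rewrite bform_col.
have [b Wb] : exists b, col b W != 0.
  apply/existsP; apply: contraR W0 => /existsPn cols0; apply/eqP/matrixP => a b.
  by have /negPn/eqP/matrixP/(_ a 0) := cols0 b; rewrite !mxE.
rewrite (bigD1 b) //=; apply: lt_le_trans (Apos _ Wb) _; rewrite lerDl.
apply: sumr_ge0 => j _; have [->|/Apos/ltW //] := eqVneq (col j W) 0.
by rewrite mulmx0 mxE.
Qed.

Lemma gram_lin_comb A k m (C : 'M[R]_(k, m)) (f : 'I_m -> 'M[R]_p) g :
  (forall x, g x = \sum_j C x j *: f j) -> gram A g = C *m gram A f *m C^T.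
Proof.
move=> gE; apply/matrixP => x y; rewrite !mxE gE bform_suml.
under eq_bigr do rewrite gE bform_sumr big_distrr.
under [RHS]eq_bigr do rewrite !mxE big_distrl.
rewrite exchange_big /=; apply: eq_bigr => j _; apply: eq_bigr => l _.
rewrite !mxE; ring.
Qed.

Lemma gram_unit_lin_indep A k (g : 'I_k -> 'M[R]_p) :
  gram A g \in unitmx -> lin_indep g.
Proof.
move=> Gu a ag0 t.
have aG0 : \row_s a s *m gram A g = 0.
  apply/matrixP => x l; rewrite !mxE.
  transitivity (bform A (\sum_s a s *: g s) (g l)).
    by rewrite bform_suml; apply: eq_bigr => s _; rewrite !mxE.
  by rewrite ag0 /bform mulmx0 mul0mx linear0.
by have /matrixP/(_ 0 t) := mulmxK Gu (\row_s a s); rewrite aG0 mul0mx !mxE.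
Qed.

Lemma posdef_gram A k (g : 'I_k -> 'M[R]_p) :
  posdef A -> lin_indep g -> posdef (gram A g).
Proof.
move=> Apd gfree; split.
  by apply/matrixP => x y; rewrite !mxE bform_sym //; case: Apd.
move=> x x0; pose W := \sum_s x s 0 *: g s.
have W0 : W != 0.
  apply: contra x0 => /eqP /gfree W0; apply/eqP/matrixP => s j.
  by rewrite (ord1 j) W0 mxE.
have WE (y : 'I_1) : W = \sum_s x^T y s *: g s.
  by apply: eq_bigr => s _; rewrite mxE (ord1 y).
have /matrixP/(_ 0 0) := gram_lin_comb A WE; rewrite mxE trmxK => <-.
exact: bform_gt0.
Qed.

Lemma posdef_unit k (S : 'M[R]_k) : posdef S -> S \in unitmx.
Proof.
move=> [_ Spos]; rewrite unitmxE unitfE; apply/negP => /det0P[v v0 vS].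
by have := Spos v^T; rewrite trmx_eq0 trmxK vS mul0mx mxE ltxx => /(_ v0).
Qed.

Lemma det_schur m (a : R) (v : 'rV[R]_m) (P : 'M[R]_m) : P \in unitmx ->
  \det (block_mx a%:M v v^T P) = \det P * (a - (v *m invmx P *m v^T) 0 0).
Proof.
move=> Pu.
have -> : block_mx a%:M v v^T P = block_mx 1%:M (v *m invmx P) 0 1%:M *m
    block_mx (a%:M - v *m invmx P *m v^T) 0 v^T P.
  by rewrite mulmx_block ?mul1mx ?mul0mx ?mulmx0 ?addr0 ?add0r subrK mulmxKV.
rewrite det_mulmx det_ublock det_lblock !det1 !mul1r det_mx11 !mxE /=.
by rewrite mulr1n mulrC.
Qed.

Lemma det_phi_psi_ratio A e k (g : 'I_k -> 'M[R]_p) : psi A g \in unitmx ->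
  \det (phi A e g) / \det (psi A g) =
  \tr (A *m e *m e) - (vrow A e g *m invmx (psi A g) *m (vrow A e g)^T) 0 0.
Proof.
move=> psi_unit; rewrite (det_schur _ _ psi_unit) mulrAC divff ?mul1r //.
by rewrite -unitfE -unitmxE.
Qed.

Lemma invmx_congr m (C P : 'M[R]_m) : C \in unitmx -> P \in unitmx ->
  C^T *m invmx (C *m P *m C^T) *m C = invmx P.
Proof.
move=> Cu Pu; set Q := C *m P *m C^T.
have CTu : C^T \in unitmx by rewrite unitmx_tr.
have Qu : Q \in unitmx by rewrite !unitmx_mul Cu Pu CTu.
have CPE : C *m P = Q *m invmx C^T by rewrite mulmxK.
have CPinv : C^T *m invmx Q *m (C *m P) = 1%:M.
  by rewrite CPE mulmxA mulmxKV // mulmxV.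
by rewrite -[LHS]mulmx1 -(mulmxV Pu) mulmxA -(mulmxA _ C P) CPinv mul1mx.
Qed.

End GramMatrices.

Lemma sum_scale_mulmx (R : rcfType) (p h k l : nat) (a : 'M[R]_(h, k))
    (M : 'M[R]_(k, l)) (g : 'I_l -> 'M[R]_p) x :
  \sum_j a x j *: \sum_s M j s *: g s = \sum_s (a *m M) x s *: g s.
Proof.
under eq_bigr do rewrite scaler_sumr.
rewrite exchange_big /=; apply: eq_bigr => s _; rewrite mxE scaler_suml.
by apply: eq_bigr => j _; rewrite scalerA.
Qed.

Section OrthonormalCoordinates.
Variables (R : rcfType) (p m : nat) (P : 'M[R]_p -> Prop) (f : 'I_m -> 'M[R]_p).
Hypothesis f_onb : is_onbasis P f.

Definition coordmx k (g : 'I_k -> 'M[R]_p) : 'M[R]_(k, m) :=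
  \matrix_(x, j) bform 1%:M (g x) (f j).

Lemma gram_onb : gram 1%:M f = 1%:M.
Proof. by apply/matrixP => x y; rewrite !mxE /bform mul1mx f_onb.2. Qed.

Lemma onb_expand y : P y -> y = \sum_j bform 1%:M y (f j) *: f j.
Proof.
have [[_ _ f_span] f_orth] := f_onb; move=> /f_span[a ->].
apply: eq_bigr => j _; congr (_ *: _); rewrite bform_suml (bigD1 j) //=.
rewrite big1 => [|k kj]; first by rewrite /bform mul1mx f_orth eqxx mulr1 addr0.
by rewrite /bform mul1mx f_orth (negbTE kj) mulr0.
Qed.

Section Family.
Variables (k : nat) (g : 'I_k -> 'M[R]_p).
Hypothesis gP : forall x, P (g x).

Lemma coordmxP x : g x = \sum_j coordmx g x j *: f j.
Proof. by rewrite {1}(onb_expand (gP x)); apply: eq_bigr => j _; rewrite mxE. Qed.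

Lemma gram_coordmx A : gram A g = coordmx g *m gram A f *m (coordmx g)^T.
Proof. exact: gram_lin_comb coordmxP. Qed.

Lemma gram1_coordmx : gram 1%:M g = coordmx g *m (coordmx g)^T.
Proof. by rewrite gram_coordmx gram_onb mulmx1. Qed.

Lemma vrow_coordmx A e : vrow A e g = vrow A e f *m (coordmx g)^T.
Proof.
apply/matrixP => x y; rewrite (ord1 x) !mxE.
have := bform_sumr A e (coordmx g y) f; rewrite /bform -coordmxP => ->.
by apply: eq_bigr => j _; rewrite !mxE mulrC.
Qed.

Lemma rank_gram_spanning :
  (forall y, P y -> exists a : 'I_k -> R, y = \sum_s a s *: g s) ->
  \rank (gram 1%:M g) = m.
Proof.
move=> g_span; have [[f_in _ _] f_orth] := f_onb.
have /fin_all_exists[a fE] := fun j => g_span _ (f_in j).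
pose F := \matrix_(j, s) a j s : 'M[R]_(m, k).
have FC : F *m coordmx g = 1%:M.
  apply/matrixP => j l; rewrite !mxE.
  transitivity (bform 1%:M (f j) (f l)); last by rewrite /bform mul1mx f_orth.
  by rewrite (fE j) bform_suml; apply: eq_bigr => s _; rewrite !mxE.
apply/eqP; rewrite eqn_leq gram1_coordmx; apply/andP; split.
  exact: leq_trans (mxrankM_maxl _ _) (rank_leq_col _).
have FGF : F *m (coordmx g *m (coordmx g)^T) *m F^T = 1%:M.
  by rewrite mulmxA FC mul1mx -trmx_mul FC trmx1.
have rankE : \rank (F *m (coordmx g *m (coordmx g)^T) *m F^T) = m.
  by rewrite FGF mxrank1.
rewrite -[X in (X <= _)%N]rankE.
exact: leq_trans (mxrankM_maxl _ _) (mxrankM_maxr _ _).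
Qed.

End Family.

Section SquareFamily.
Variable g : 'I_m -> 'M[R]_p.
Hypothesis gP : forall x, P (g x).

Lemma coordmx_unit : gram 1%:M g \in unitmx -> coordmx g \in unitmx.
Proof. by rewrite gram1_coordmx // !unitmx_mul unitmx_tr andbb. Qed.

Lemma det_gram_ratio A : gram 1%:M g \in unitmx ->
  \det (gram A f) = \det (gram A g) / \det (gram 1%:M g).
Proof.
move=> /coordmx_unit; rewrite unitmxE unitfE => C0.
by rewrite !(gram_coordmx gP) gram_onb !det_mulmx det_tr det1; field.
Qed.

Lemma basis_of_gram_unit : gram 1%:M g \in unitmx -> is_basis P g.
Proof.
move=> Gu; have Cu := coordmx_unit Gu.
split=> [//||y /onb_expand ->]; first exact: gram_unit_lin_indep Gu.
pose b := \row_j bform 1%:M y (f j); exists (fun s => (b *m invmx (coordmx g)) 0 s).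
have fE j : f j = \sum_s (invmx (coordmx g)) j s *: g s.
  under eq_bigr do rewrite (coordmxP gP).
  rewrite sum_scale_mulmx mulVmx // (bigD1 j) //= big1 => [|l lj].
    by rewrite !mxE eqxx scale1r addr0.
  by rewrite !mxE eq_sym (negbTE lj) scale0r.
by rewrite -sum_scale_mulmx; apply: eq_bigr => j _; rewrite mxE fE.
Qed.

Lemma vrow_invgram_basis_change A e :
  gram 1%:M g \in unitmx -> gram A f \in unitmx ->
  vrow A e g *m invmx (gram A g) *m (vrow A e g)^T =
  vrow A e f *m invmx (gram A f) *m (vrow A e f)^T.
Proof.
move=> /coordmx_unit Cu Gu; rewrite gram_coordmx // vrow_coordmx // trmx_mul trmxK.
by rewrite -(invmx_congr Cu Gu) !mulmxA.
Qed.

End SquareFamily.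

End OrthonormalCoordinates.

Lemma mxtrace_scaled_idem (R : rcfType) (p : nat) (A e : 'M[R]_p) (s : R) :
  e *m e = e -> 0 <= s ->
  \tr (A *m ((Num.sqrt s)^-1 *: e) *m ((Num.sqrt s)^-1 *: e)) = s^-1 * \tr (A *m e).
Proof.
move=> ee s0; rewrite -!scalemxAr -!scalemxAl scalerA -mulmxA ee.
by rewrite -invfM -expr2 sqr_sqrtr //; apply: mxtraceZ.
Qed.

Section FrameSpace.
Variables (R : rcfType) (p : nat) (E : rel 'I_p) (vcol : 'I_p -> nat).
Variables (ecol : 'I_p -> 'I_p -> nat) (r : nat) (n : 'I_r -> nat).
Local Notation Z := (inZG (R := R) E vcol ecol).
Hypothesis HZ : cBC n Z.
Variable i : nat.

Lemma BlockDiag_inM y : inM n Z i y -> BlockDiag n y = y.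
Proof.
move=> [_ y_supp]; apply/matrixP => a b; rewrite mxE.
by case: eqP => // ab; rewrite y_supp // => -[ai bi]; apply: ab; rewrite ai bi.
Qed.

Lemma inM_mulC x y : inM n Z i x -> inM n Z i y -> x *m y = y *m x.
Proof.
move=> xM yM; have [_ _ _ _ Z2] := HZ.
have [xyT _ _] := Z2 _ _ xM.1 yM.1.
have [[xT _ _] _] := xM; have [[yT _ _] _] := yM.
by rewrite (BlockDiag_inM xM) (BlockDiag_inM yM) in xyT; rewrite -xyT trmx_mul xT yT.
Qed.

Variables (d : nat) (c : 'I_d -> 'M[R]_p) (al : 'I_d).
Hypothesis c_frame : orth_idem_family n Z i c.

Lemma cgt_inM_mul x : inM n Z i x -> cgt c al *m x *m c al = 0.
Proof.
have [c_inM _ c_orth _] := c_frame.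
move=> xM; rewrite /cgt !mulmx_suml big1 // => b alb.
rewrite (inM_mulC (c_inM b) xM) -mulmxA c_orth.
have -> : (b == al) = false by rewrite eq_sym; exact: ltn_eqF.
by rewrite mulmx0.
Qed.

Lemma inM0 : inM n Z i 0.
Proof.
by split; [split=> [|*|*]; rewrite ?trmx0 ?mxE | move=> *; rewrite mxE].
Qed.

Lemma inh_mulmx z : inL n Z i z -> inh n Z i c al (z *m c al).
Proof. by exists 0, z; split; rewrite ?mulmx0 ?mul0mx ?add0r //; exact: inM0. Qed.

Lemma inh_span q (B : 'I_q -> 'M[R]_p) :
  is_basis (inL n Z i) B -> forall y, inh n Z i c al y ->
  exists a : 'I_q -> R, y = \sum_s a s *: (B s *m c al).
Proof.
move=> [_ _ B_span] y [x [z [xM /B_span[a ->] ->]]]; exists a.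
by rewrite cgt_inM_mul // add0r mulmx_suml; apply: eq_bigr => s _; rewrite scalemxAl.
Qed.

End FrameSpace.

Theorem theorem4p16 (R : rcfType) (p : nat)
  (E : rel 'I_p) (vcol : 'I_p -> nat) (ecol : 'I_p -> 'I_p -> nat)
  (HE : simple_graph E) (Hcol : edge_coloring E ecol)
  (r : nat) (n : 'I_r -> nat)
  (Hn : forall k, (0 < n k)%N) (Hsum : (\sum_(k < r) n k)%N = p)
  (HZ : cBC n (inZG (R := R) E vcol ecol))
  (i : 'I_r) (d : nat) (c : 'I_d -> 'M[R]_p)
  (Hc : jordan_frame n (inZG E vcol ecol) i c)
  (al : 'I_d)
  (m : nat) (f : 'I_m -> 'M[R]_p)
  (Hf : is_onbasis (inh n (inZG E vcol ecol) i c al) f)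
  (A : 'M[R]_p) (HA : posdef A)
  (q : nat) (B : 'I_q -> 'M[R]_p)
  (HB : is_basis (inL n (inZG E vcol ecol) i) B) :
  let U := fun t : 'I_q => B t *m c al in
  let G := \matrix_(t < q, s < q) \tr (U t *m (U s)^T) in
  let mu : R := (\rank (c al))%:R in
  let et := (Num.sqrt mu)^-1 *: c al in
  let lam := mu^-1 * \tr (A *m c al) in
  m = \rank G /\
  (m = 0%N -> \det (phi A et f) / \det (psi A f) = lam) /\
  (forall t : 'I_m -> 'I_q, (0 < m)%N ->
     let Gt := \matrix_(k < m, l < m) G (t k) (t l) in
     \det Gt != 0 ->
     let U' := fun k : 'I_m => U (t k) in
     let Psi := \matrix_(k < m, l < m) \tr (A *m U' k *m (U' l)^T) in
     let V := \row_(k < m) ((Num.sqrt mu)^-1 * \tr (A *m c al *m (U' k)^T)) in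
     [/\ is_basis (inh n (inZG E vcol ecol) i c al) U',
         posdef Psi,
         \det (psi A f) = \det Psi / \det Gt &
         \det (phi A et f) / \det (psi A f) = lam - (V *m invmx Psi *m V^T) 0 0]).
Proof.
move=> U G mu et lam.
have [[_ _ c_orth _] _] := Hc; have [B_inL _ _] := HB; have [[_ f_indep _] _] := Hf.
have U_inh s : inh n (inZG E vcol ecol) i c al (U s) := inh_mulmx c al (B_inL s).
have psi_unit : psi A f \in unitmx := posdef_unit (posdef_gram HA f_indep).
have := det_phi_psi_ratio et psi_unit.
rewrite mxtrace_scaled_idem ?c_orth ?eqxx ?ler0n // -/lam => phi_ratio.
split; first by rewrite -[G]gram1E (rank_gram_spanning Hf U_inh (inh_span HZ Hc.1 HB)).
split=> [m0 | t _ Gt Gt_det U' Psi V].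
  rewrite phi_ratio; have -> : vrow A et f = 0.
    by apply/matrixP => x k; have : (k < 0)%N by rewrite -m0.
  by rewrite !mul0mx mxE subr0.
have U'_inh k : inh n (inZG E vcol ecol) i c al (U' k) by exact: U_inh.
have GtE : Gt = gram 1%:M U' by rewrite gram1E; apply/matrixP => k l; rewrite !mxE.
have Gt_unit : gram 1%:M U' \in unitmx by rewrite -GtE unitmxE unitfE.
have U'_basis := basis_of_gram_unit Hf U'_inh Gt_unit.
have [_ U'_indep _] := U'_basis.
have PsiE : Psi = gram A U' by [].
have VE : V = vrow A et U'.
  by apply/matrixP => x k; rewrite !mxE -scalemxAr -scalemxAl mxtraceZ.
split=> //; first exact: posdef_gram HA U'_indep.
  by rewrite GtE PsiE (det_gram_ratio Hf U'_inh).
by rewrite phi_ratio VE PsiE (vrow_invgram_basis_change Hf U'_inh).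
Qed.
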